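(* Let $f$ and $g$ be multiplicative functions such that $S_f(x)\ll x^\alpha$, and suppose that $\hat{\mathbb{D}}_{\beta,k}(f,g)<\infty$ for some $\beta$ and some positive integer $k$. Suppose additionally that $f(n)=o(n^\delta)$ and $g(n)=o(n^\delta)$ for some $\delta>0$. Let $h$ be defined by $g=f*h$. If $\sigma>1/(k+1)+\delta$ is such that $\sigma\ge\max(\alpha,\beta)$, then there is $Y>0$ such that if $\hat H_Y(\sigma)$ is convergent, then $S_g(x)\ll x^\sigma$.
   Context: $S_f(x):=\sum_{n\le x}f(n)$. For multiplicative $f,g$ (not necessarily bounded), $\hat{\mathbb{D}}_{\beta,k}(f,g):=\sum_p\sum_{j=1}^k\frac{|f(p^j)-g(p^j)|}{p^{j\beta}}$ (sum over primes); $f,g$ are called $(\beta,k)$-strongly pretentious if this is finite. $(f*h)(n)=\sum_{dm=n}f(d)h(m)$. $\hat H_Y(\sigma):=\sum_{p\le Y}\sum_{k=1}^\infty\frac{|h(p^k)|}{p^{k\sigma}}$. *)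

From HB Require Import structures.
From mathcomp Require Import all_boot all_order all_algebra.
From mathcomp Require Import complex.
From mathcomp Require Import all_classical all_reals all_analysis.
Set Implicit Arguments. Unset Strict Implicit. Unset Printing Implicit Defensive.
Import Order.TTheory GRing.Theory Num.Theory.
Local Open Scope ring_scope.

Section Defs.
Variable R : realType.

(* multiplicative arithmetic function (the value at 0 is irrelevant) *)
Definition mult_fun (f : nat -> R[i]) : Prop :=
  f 1%N = 1 /\ forall m n : nat, (0 < m)%N -> (0 < n)%N -> coprime m n ->
    f (m * n)%N = f m * f n.

Definition Ssum (f : nat -> R[i]) (x : R) : R[i] :=
  \sum_(1 <= n < (Num.truncn x).+1) f n.

Definition dconv (f h : nat -> R[i]) (n : nat) : R[i] :=
  \sum_(d <- divisors n) f d * h (n %/ d)%N.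

Definition Sbound (f : nat -> R[i]) (a : R) : Prop :=
  exists C : R, forall x : R, 1 <= x -> Normc.normc (Ssum f x) <= C * x `^ a.

Definition little_o_pow (f : nat -> R[i]) (d : R) : Prop :=
  forall eps : R, 0 < eps -> exists N : nat, forall n : nat, (N <= n)%N ->
    Normc.normc (f n) <= eps * (n%:R) `^ d.

(* hat D_{beta,k}(f,g) < oo : the (nonnegative) series over primes p of
   sum_{j=1}^k |f(p^j) - g(p^j)| / p^{j beta} has bounded partial sums *)
Definition strongly_pretentious (beta : R) (k : nat) (f g : nat -> R[i]) : Prop :=
  exists B : R, forall N : nat,
    \sum_(p < N | prime p)
       \sum_(1 <= j < k.+1) Normc.normc (f (p ^ j)%N - g (p ^ j)%N) / (p%:R) `^ (j%:R * beta)
    <= B.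

(* hat H_Y(sigma) = sum_{p <= Y} sum_{k >= 1} |h(p^k)| / p^{k sigma} is
   convergent: the (nonnegative) series has bounded partial sums *)
Definition Hhat_convergent (h : nat -> R[i]) (Y sigma : R) : Prop :=
  exists B : R, forall K : nat,
    \sum_(p < (Num.truncn Y).+1 | prime p)
       \sum_(1 <= j < K) Normc.normc (h (p ^ j)%N) / (p%:R) `^ (j%:R * sigma)
    <= B.

End Defs.

From HB Require Import structures.
From mathcomp Require Import all_boot all_order all_algebra.
From mathcomp Require Import complex.
From mathcomp Require Import all_classical all_reals all_analysis.
From mathcomp Require Import lra zify ring.
Set Implicit Arguments. Unset Strict Implicit. Unset Printing Implicit Defensive.
Import Order.TTheory GRing.Theory Num.Theory.
Local Open Scope ring_scope.

(* Since g = f * h, S_g(x) = sum_{m <= x} h(m) S_f(x/m), so |S_g(x)| << x^sigma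
   sum_{m <= x} |h(m)| m^-sigma and it suffices to bound the latter sums.  As h
   is multiplicative, an Euler product bounds them by
   exp (sum_p sum_{j >= 1} |h(p^j)| p^(-j sigma)).  For p <= Y the inner sums
   are those of H_Y(sigma).  For p > Y, where |f(p^j)|, |g(p^j)| <= p^(j delta)/4,
   the relation g(p^j) = sum_i f(p^i) h(p^(j-i)) is a renewal inequality giving
   sum_{j >= 1} |h(p^j)| p^(-j sigma)
     <= 2 sum_{1 <= j <= k} |f(p^j) - g(p^j)| p^(-j beta) + 2 p^(-(k+1)(sigma - delta)),
   which is summable over p by strong pretentiousness and (k+1)(sigma - delta) > 1. *)

Section NonnegativeSums.
Variable R : numDomainType.

Lemma ler_sum_subset_uniq (T : eqType) (s t : seq T) (F : T -> R) :
  uniq s -> uniq t -> {subset s <= t} -> {in t, forall x, 0 <= F x} ->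
  \sum_(x <- s) F x <= \sum_(x <- t) F x.
Proof.
move=> us ut st F0; rewrite [X in _ <= X](bigID (mem s)) /=.
have -> : \sum_(x <- t | x \in s) F x = \sum_(x <- s) F x.
  rewrite -big_filter; apply: perm_big; apply: uniq_perm; rewrite ?filter_uniq //.
  by move=> x; rewrite mem_filter; case xs: (x \in s); rewrite //= st.
by rewrite lerDl big_seq_cond sumr_ge0 // => x /andP[/F0].
Qed.

Lemma ler_sum_inj (T U : eqType) (s : seq T) (t : seq U) (phi : T -> U)
    (F : U -> R) :
  uniq s -> uniq t -> {in s &, injective phi} -> {in s, forall x, phi x \in t} ->
  {in t, forall y, 0 <= F y} ->
  \sum_(x <- s) F (phi x) <= \sum_(y <- t) F y.
Proof.
move=> us ut phi_inj phi_t F0; rewrite -(big_map phi xpredT F).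
apply: ler_sum_subset_uniq => //; first by rewrite map_inj_in_uniq.
by move=> y /mapP[x xs ->]; apply: phi_t.
Qed.

Lemma ler_sum_nat_widen (m m' n n' : nat) (F : nat -> R) :
  (m' <= m)%N -> (n <= n')%N -> (forall i, 0 <= F i) ->
  \sum_(m <= i < n) F i <= \sum_(m' <= i < n') F i.
Proof.
move=> m'm nn' F0; apply: ler_sum_subset_uniq; rewrite ?iota_uniq // => i.
by rewrite !mem_index_iota => /andP[mi i_n]; apply/andP; split; lia.
Qed.

End NonnegativeSums.

Section NormcSums.
Variable R : rcfType.

Lemma normc_ge0 (x : R[i]) : 0 <= Normc.normc x.
Proof. by case: x => a b /=; apply: sqrtr_ge0. Qed.

Lemma ler_normc_sum (I : Type) (s : seq I) (P : pred I) (F : I -> R[i]) :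
  Normc.normc (\sum_(i <- s | P i) F i) <= \sum_(i <- s | P i) Normc.normc (F i).
Proof.
elim: s => [|x s IH]; first by rewrite !big_nil Normc.normc0.
rewrite !big_cons; case: (P x) => //.
by apply: le_trans (le_normcD _ _) _; rewrite lerD2l.
Qed.

End NormcSums.

Lemma divnMM m n d1 d2 : (d1 %| m)%N -> (d2 %| n)%N -> (0 < d1)%N -> (0 < d2)%N ->
  ((m * n) %/ (d1 * d2) = (m %/ d1) * (n %/ d2))%N.
Proof.
move=> d1m d2n d1_gt0 d2_gt0.
by rewrite -{1}(divnK d1m) -{1}(divnK d2n) mulnACA mulnK // muln_gt0 d1_gt0.
Qed.

Lemma divisors_coprime_mul m n : (0 < m)%N -> (0 < n)%N -> coprime m n ->
  perm_eq (divisors (m * n))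
    [seq (d1 * d2)%N | d1 <- divisors m, d2 <- divisors n].
Proof.
move=> m0 n0 cmn; have mn0 : (0 < m * n)%N by rewrite muln_gt0 m0.
have gcd_m x y : (x %| m)%N -> (y %| n)%N -> gcdn m (x * y) = x.
  move=> xm yn; rewrite Gauss_gcdl; first exact/gcdn_idPr.
  exact: coprime_dvdr yn cmn.
have gcd_n x y : (x %| m)%N -> (y %| n)%N -> gcdn n (x * y) = y.
  move=> xm yn; rewrite Gauss_gcdr; first exact/gcdn_idPr.
  by rewrite coprime_sym; exact: coprime_dvdl xm cmn.
apply: uniq_perm; first exact: divisors_uniq.
- apply: allpairs_uniq; try exact: divisors_uniq.
  move=> [x1 y1] [x2 y2] /allpairsP[[a b] /= [ha hb [-> ->]]]
     /allpairsP[[c e] /= [hc he [-> ->]]] /= abce.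
  rewrite -!dvdn_divisors // in ha hb hc he.
  have ac : a = c by rewrite -(gcd_m a b) // abce gcd_m.
  by rewrite ac in abce *; congr pair; rewrite -(gcd_n c b) // abce gcd_n.
move=> d; apply/idP/idP.
- rewrite -dvdn_divisors // => dmn.
  apply/allpairsP; exists (gcdn d m, gcdn d n) => /=.
  rewrite -!dvdn_divisors // !dvdn_gcdr; split => //.
  apply/eqP; rewrite eqn_dvd; apply/andP; split.
    have d_m_gcd : (d %| m * gcdn d n)%N.
      by rewrite muln_gcdr dvdn_gcd dvdn_mull ?dvdnn.
    by rewrite muln_gcdl dvdn_gcd d_m_gcd dvdn_mulr.
  rewrite Gauss_dvd ?dvdn_gcdl //.
  apply: coprime_dvdl (dvdn_gcdr _ _) _.
  by rewrite coprime_sym; apply: coprime_dvdl (dvdn_gcdr _ _) _; rewrite coprime_sym.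
- move=> /allpairsP[[a b] /= [ha hb ->]].
  by rewrite -!dvdn_divisors // in ha hb *; apply: dvdn_mul.
Qed.

Lemma divisors_pfactor p j : prime p ->
  perm_eq (divisors (p ^ j)) [seq (p ^ i)%N | i <- iota 0 j.+1].
Proof.
move=> pp; have pj0 : (0 < p ^ j)%N by rewrite expn_gt0 prime_gt0.
apply: uniq_perm; first exact: divisors_uniq.
  by rewrite map_inj_uniq ?iota_uniq //; apply: expnI; exact: prime_gt1.
move=> d; rewrite -dvdn_divisors //; apply/idP/idP.
  by move/(dvdn_pfactor d j pp) => [i ij ->]; apply: map_f; rewrite mem_iota.
case/mapP => i; rewrite mem_iota /= => ij ->.
by apply/(dvdn_pfactor _ _ pp); exists i.
Qed.

Lemma coprime_pfactor_quot p m : prime p -> (0 < m)%N ->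
  coprime p (m %/ p ^ logn p m).
Proof.
move=> pp m0; have [m' cpm' mE] := pfactor_coprime pp m0.
by rewrite {1}mE mulnK // expn_gt0 prime_gt0.
Qed.

Section DirichletConvolution.
Variable R : realType.
Implicit Types F G H : nat -> R[i].

Lemma dconv_coprime F H m n : (0 < m)%N -> (0 < n)%N -> coprime m n ->
  dconv F H (m * n) = \sum_(d1 <- divisors m) \sum_(d2 <- divisors n)
     F (d1 * d2)%N * H (m %/ d1 * (n %/ d2))%N.
Proof.
move=> m0 n0 cmn.
rewrite /dconv (perm_big _ (@divisors_coprime_mul m n m0 n0 cmn)) big_allpairs_dep /=.
apply: eq_big_seq => d1; rewrite -dvdn_divisors // => d1m.
apply: eq_big_seq => d2; rewrite -dvdn_divisors // => d2n.
by rewrite divnMM // ?(dvdn_gt0 m0 d1m) ?(dvdn_gt0 n0 d2n).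
Qed.

Lemma dconv_pfactor F H p j : prime p ->
  dconv F H (p ^ j) = \sum_(i < j.+1) F (p ^ i)%N * H (p ^ (j - i))%N.
Proof.
move=> pp; have p0 := prime_gt0 pp.
rewrite /dconv (perm_big _ (divisors_pfactor j pp)) big_map.
rewrite -(big_mkord xpredT (fun i => F (p ^ i)%N * H (p ^ (j - i))%N)).
rewrite /index_iota subn0; apply: eq_big_seq => i; rewrite mem_iota /= => ij.
by rewrite -expnB.
Qed.

Lemma sum_dconv F H T :
  \sum_(1 <= n < T.+1) dconv F H n =
  \sum_(1 <= m < T.+1) H m * \sum_(1 <= d < T.+1 | (d * m <= T)%N) F d.
Proof.
have dconvE n : (1 <= n < T.+1)%N -> dconv F H n =
    \sum_(1 <= d < T.+1) (if (d %| n)%N then F d * H (n %/ d)%N else 0).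
  move=> /andP[n1 nT]; rewrite /dconv -big_mkcond /= -[RHS]big_filter.
  apply: perm_big; apply: uniq_perm.
  - exact: divisors_uniq.
  - by rewrite filter_uniq // iota_uniq.
  - move=> d; rewrite -dvdn_divisors // mem_filter mem_iota.
    case dn: (d %| n)%N => //=.
    by have := dvdn_gt0 n1 dn; have := dvdn_leq n1 dn; lia.
rewrite (eq_big_nat _ _ dconvE) exchange_big_nat /=.
rewrite [RHS](eq_bigr (fun m => \sum_(1 <= d < T.+1)
    (if (d * m <= T)%N then F d * H m else 0))); last first.
  move=> m _; rewrite big_mkcond mulr_sumr; apply: eq_bigr => d _.
  by case: ifP => _; rewrite ?mulr0 // mulrC.
rewrite [RHS]exchange_big_nat /=; apply: eq_big_nat => d /andP[d1 dT].
rewrite -!big_mkcond /= -[LHS]big_filter -[RHS]big_filter.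
have -> : [seq n <- index_iota 1 T.+1 | (d %| n)%N] =
  [seq (d * m)%N | m <- [seq m <- index_iota 1 T.+1 | (d * m <= T)%N]].
  apply: (irr_sorted_eq ltn_trans ltnn).
  - by apply: sorted_filter; [exact: ltn_trans | exact: iota_ltn_sorted].
  - rewrite sorted_map; apply: (@sub_sorted _ ltn).
      by move=> x y xy /=; rewrite ltn_pmul2l.
    by apply: sorted_filter; [exact: ltn_trans | exact: iota_ltn_sorted].
  - move=> n; rewrite mem_filter mem_iota; apply/idP/idP.
    + move=> /andP[/dvdnP[m ->] /andP[nm1 nmT]]; apply/mapP; exists m.
        by rewrite mem_filter mem_iota; apply/and3P; split; nia.
      by rewrite mulnC.
    + move/mapP => [m]; rewrite mem_filter mem_iota => /and3P[mT m1 m2] ->.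
      by rewrite dvdn_mulr //=; lia.
by rewrite big_map; apply: eq_bigr => m _; rewrite mulKn.
Qed.

Lemma Ssum_div_trunc F x m : 0 <= x -> (1 <= m < (Num.truncn x).+1)%N ->
  \sum_(1 <= d < (Num.truncn x).+1 | (d * m <= Num.truncn x)%N) F d =
  Ssum F (x / m%:R).
Proof.
move=> x0 /andP[m1 mT].
have m0 : (0 < m%:R :> R) by rewrite ltr0n.
have m1' : (1 <= m%:R :> R) by rewrite ler1n.
have xm0 : 0 <= x / m%:R by rewrite divr_ge0 // ltW.
have truncn_le : (Num.truncn (x / m%:R) <= Num.truncn x)%N.
  by apply: le_truncn; rewrite ler_pdivrMr //; nra.
rewrite /Ssum (big_nat_widen _ _ _ _ _ (truncn_le : (_.+1 <= _.+1)%N)).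
apply: eq_bigl => d /=.
by rewrite ltnS !truncn_ge_nat // ler_pdivlMr // -natrM.
Qed.

Lemma Ssum_dconv F H x : 0 <= x ->
  Ssum (dconv F H) x = \sum_(1 <= m < (Num.truncn x).+1) H m * Ssum F (x / m%:R).
Proof.
move=> x0; rewrite [LHS]/Ssum sum_dconv.
by apply: eq_big_nat => m hm; rewrite Ssum_div_trunc.
Qed.

Lemma eq_Ssum F G x : (forall n, (0 < n)%N -> F n = G n) -> Ssum F x = Ssum G x.
Proof. by move=> FG; apply: eq_big_nat => n /andP[n1 _]; apply: FG. Qed.

Lemma Sbound_dconv F H (alpha sigma K : R) :
  Sbound F alpha -> alpha <= sigma ->
  (forall M, \sum_(1 <= m < M.+1) Normc.normc (H m) / m%:R `^ sigma <= K) ->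
  Sbound (dconv F H) sigma.
Proof.
move=> [C SF] alpha_le HK; exists (C * K) => x x1.
have x0 : 0 <= x by apply: le_trans x1.
have C0 : 0 <= C.
  by have := SF 1 (lexx 1); rewrite powR1 mulr1; apply: le_trans (normc_ge0 _).
rewrite Ssum_dconv //; apply: le_trans (ler_normc_sum _ _ _) _.
apply: le_trans (_ : \sum_(1 <= m < (Num.truncn x).+1)
    C * x `^ sigma * (Normc.normc (H m) / m%:R `^ sigma) <= _).
  rewrite big_nat_cond [X in _ <= X]big_nat_cond.
  apply: ler_sum => m /andP[/andP[m1 mx] _].
  have m0 : (0 < m%:R :> R) by rewrite ltr0n.
  have xm1 : 1 <= x / m%:R by rewrite ler_pdivlMr // mul1r -truncn_ge_nat // -ltnS.
  have xm_pow : (x / m%:R) `^ sigma = x `^ sigma / m%:R `^ sigma.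
    rewrite powRM //; congr (_ * _).
    by rewrite -(powR_inv1 (ltW m0)) powRAC powR_inv1 // powR_ge0.
  have xm_le : (x / m%:R) `^ alpha <= x `^ sigma / m%:R `^ sigma.
    by rewrite -xm_pow; apply: ler_powR.
  rewrite Normc.normcM; apply: le_trans (ler_wpM2l (normc_ge0 _) (SF _ xm1)) _.
  apply: le_trans (ler_wpM2l (normc_ge0 _) (ler_wpM2l C0 xm_le)) _.
  by rewrite le_eqVlt; apply/orP; left; apply/eqP; ring.
rewrite -mulr_sumr [X in _ <= X]mulrAC; apply: ler_wpM2l (HK _).
by rewrite mulr_ge0 // powR_ge0.
Qed.

End DirichletConvolution.

Section DirichletQuotient.
Variable R : realType.
Variables f g h : nat -> R[i].
Hypothesis f_mult : mult_fun f.
Hypothesis g_mult : mult_fun g.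
Hypothesis gE : forall n : nat, (0 < n)%N -> g n = dconv f h n.

Lemma conv_quot1 : h 1%N = 1.
Proof.
have := @gE 1%N (ltnSn 0); rewrite /dconv big_seq1 divnn /=.
by case: f_mult => -> _; case: g_mult => -> _; rewrite mul1r.
Qed.

(* Every term of [dconv f h (m * n)] except the one for [d1 = d2 = 1] factors
   as a term of [dconv f h m * dconv f h n]. *)
Lemma dconv_mul_defect m n : (0 < m)%N -> (0 < n)%N -> coprime m n ->
  (forall a b, (0 < a)%N -> (0 < b)%N -> coprime a b -> (a * b < m * n)%N ->
     h (a * b)%N = h a * h b) ->
  dconv f h (m * n) = dconv f h m * dconv f h n + (h (m * n)%N - h m * h n).
Proof.
move=> m0 n0 cmn h_mul_lt; have mn0 : (0 < m * n)%N by rewrite muln_gt0 m0.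
pose defect := h (m * n)%N - h m * h n.
have termE d1 d2 : d1 \in divisors m -> d2 \in divisors n ->
    f (d1 * d2)%N * h (m %/ d1 * (n %/ d2))%N =
    f d1 * h (m %/ d1)%N * (f d2 * h (n %/ d2)%N) +
    (if (d1 == 1%N) && (d2 == 1%N) then defect else 0).
  rewrite -!dvdn_divisors // => d1m d2n.
  have d1_gt0 := dvdn_gt0 m0 d1m; have d2_gt0 := dvdn_gt0 n0 d2n.
  case: ifP => [/andP[/eqP -> /eqP ->]|d12_neq1].
    by rewrite !divn1 muln1; case: f_mult => -> _; rewrite !mul1r addrC subrK.
  have c12 : coprime d1 d2 by apply: coprime_dvdl d1m (coprime_dvdr d2n cmn).
  have d12_gt1 : (1 < d1 * d2)%N.
    by rewrite ltn_neqAle muln_gt0 d1_gt0 d2_gt0 andbT eq_sym muln_eq1 d12_neq1.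
  rewrite addr0 h_mul_lt.
  + by case: f_mult => _ ->; rewrite // mulrACA.
  + by rewrite divn_gt0 // dvdn_leq.
  + by rewrite divn_gt0 // dvdn_leq.
  + apply: (coprime_dvdl (@dvdn_div d1 m d1m)).
    exact: (coprime_dvdr (@dvdn_div d2 n d2n) cmn).
  + by rewrite -divnMM // ltn_Pdiv.
rewrite dconv_coprime // /dconv mulr_suml.
rewrite (eq_big_seq (fun d1 => \sum_(d2 <- divisors n)
   (f d1 * h (m %/ d1)%N * (f d2 * h (n %/ d2)%N) +
    (if (d1 == 1%N) && (d2 == 1%N) then defect else 0)))); last first.
  by move=> d1 d1m; apply: eq_big_seq => d2 d2n; apply: termE.
rewrite (eq_bigr (fun d1 => f d1 * h (m %/ d1)%N *
    \sum_(d2 <- divisors n) (f d2 * h (n %/ d2)%N) +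
    \sum_(d2 <- divisors n) (if (d1 == 1%N) && (d2 == 1%N) then defect else 0)));
  last by move=> d1 _; rewrite big_split /= mulr_sumr.
rewrite big_split /=; congr (_ + _).
rewrite (bigD1_seq 1%N) ?divisor1 ?divisors_uniq //= (bigD1_seq 1%N) ?divisor1 ?divisors_uniq //=.
rewrite [X in _ + X + _]big1; last by move=> i /negPf ->.
by rewrite addr0 [X in _ + X]big1 ?addr0 // => i /negPf ->; rewrite big1.
Qed.

Lemma conv_quot_mul m n : (0 < m)%N -> (0 < n)%N -> coprime m n ->
  h (m * n)%N = h m * h n.
Proof.
have [N] := ubnP (m * n)%N; elim: N m n => // N IH m n mnN m0 n0 cmn.
have mn0 : (0 < m * n)%N by rewrite muln_gt0 m0.
have h_mul_lt a b : (0 < a)%N -> (0 < b)%N -> coprime a b -> (a * b < m * n)%N ->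
    h (a * b)%N = h a * h b.
  by move=> a0 b0 cab abmn; apply: IH => //; apply: leq_trans abmn _; rewrite -ltnS.
have := dconv_mul_defect m0 n0 cmn h_mul_lt.
rewrite -(@gE _ mn0) -(@gE m m0) -(@gE n n0); case: g_mult => _ -> // /eqP.
by rewrite addrC -subr_eq subrr eq_sym subr_eq0 => /eqP.
Qed.

Lemma conv_quot_pfactor p j : prime p -> (0 < j)%N ->
  h (p ^ j)%N = g (p ^ j)%N - f (p ^ j)%N - \sum_(1 <= i < j) f (p ^ i)%N * h (p ^ (j - i))%N.
Proof.
move=> pp j_gt0.
rewrite gE ?expn_gt0 ?prime_gt0 // dconv_pfactor //.
rewrite -(big_mkord xpredT (fun i => f (p ^ i)%N * h (p ^ (j - i))%N)).
rewrite big_ltn // big_nat_recr //= subn0 expn0 subnn expn0 conv_quot1.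
by case: f_mult => -> _; rewrite mul1r mulr1 addrA !addrK.
Qed.

Lemma conv_quot_pfactor_le p j (P : R) : prime p -> (0 < j)%N -> 0 < P ->
  Normc.normc (h (p ^ j)%N) / P ^+ j <=
  Normc.normc (g (p ^ j)%N - f (p ^ j)%N) / P ^+ j +
  \sum_(1 <= i < j) Normc.normc (f (p ^ i)%N) / P ^+ i *
                    (Normc.normc (h (p ^ (j - i))%N) / P ^+ (j - i)).
Proof.
move=> pp j0 P0; rewrite (conv_quot_pfactor pp j0).
set S := \sum_(1 <= i < j) _.
have PXV_ge0 : 0 <= (P ^+ j)^-1 by rewrite invr_ge0 ltW // exprn_gt0.
apply: le_trans (_ : (Normc.normc (g (p ^ j)%N - f (p ^ j)%N) + Normc.normc S)
    / P ^+ j <= _).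
  by apply: ler_wpM2r => //; apply: le_trans (le_normcD _ _) _; rewrite normcN.
rewrite mulrDl lerD2l; apply: le_trans (ler_wpM2r PXV_ge0 (ler_normc_sum _ _ _)) _.
rewrite mulr_suml big_nat_cond [X in _ <= X]big_nat_cond.
apply: ler_sum => i /andP[/andP[i1 ij] _].
by rewrite Normc.normcM mulrACA -invfM -exprD subnKC ?(ltnW ij).
Qed.

End DirichletQuotient.

Lemma prod1D_le_expR_sum (R : realType) (I : Type) (r : seq I) (P : pred I)
    (X : I -> R) :
  (forall i, 0 <= X i) ->
  \prod_(i <- r | P i) (1 + X i) <= expR (\sum_(i <- r | P i) X i).
Proof.
move=> X0; rewrite expR_sum; apply: ler_prod => i _.
by rewrite expR_ge1Dx andbT addr_ge0.
Qed.

Definition smooth_seq (n M : nat) : seq nat :=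
  [seq m <- iota 1 M | all (fun q => (q < n)%N) (primes m)].

Lemma smooth_seq_nonprime n M : ~~ prime n -> smooth_seq n.+1 M = smooth_seq n M.
Proof.
move=> pn; apply: eq_filter => x; apply: eq_in_all => q.
rewrite mem_primes => /and3P[pq _ _]; rewrite ltnS leq_eqVlt.
by case: eqP => // qn; move: pn; rewrite -qn pq.
Qed.

Lemma smooth_seq_all M : smooth_seq M.+1 M = iota 1 M.
Proof.
apply/all_filterP; apply/allP => x; rewrite mem_iota => /andP[x1 xM].
apply/allP => q; rewrite mem_primes => /and3P[_ x0 qx].
by have := dvdn_leq x0 qx; lia.
Qed.

Section EulerProduct.
Variable R : realType.
Variable a : nat -> R.
Hypothesis a1 : a 1%N = 1.
Hypothesis a_ge0 : forall m, 0 <= a m.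
Hypothesis a_mul : forall m n, (0 < m)%N -> (0 < n)%N -> coprime m n ->
  a (m * n)%N = a m * a n.

(* [m |-> (logn n m, m / n ^ logn n m)] maps [smooth_seq n.+1 M] injectively
   into [[0, M] x smooth_seq n M]. *)
Lemma sum_smooth_seq_prime M n : prime n ->
  \sum_(m <- smooth_seq n.+1 M) a m <=
  (\sum_(j <- iota 0 M.+1) a (n ^ j)%N) * \sum_(m <- smooth_seq n M) a m.
Proof.
move=> pn; have n1 : (1 < n)%N by apply: prime_gt1.
have n0 : (0 < n)%N by apply: prime_gt0.
pose phi (m : nat) := (logn n m, (m %/ n ^ logn n m)%N).
pose G (x : nat * nat) := a (n ^ x.1)%N * a x.2.
have mE m : m = (n ^ logn n m * (m %/ n ^ logn n m))%N.
  by rewrite mulnC divnK // pfactor_dvdnn.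
have quot_gt0 m : (0 < m)%N -> (0 < m %/ n ^ logn n m)%N.
  by move=> m0; rewrite divn_gt0 ?expn_gt0 ?n0 // dvdn_leq // pfactor_dvdnn.
have quot_ndvd m : (0 < m)%N -> ~~ (n %| m %/ n ^ logn n m)%N.
  by move=> m0; rewrite -prime_coprime // coprime_pfactor_quot.
rewrite (eq_big_seq (fun m => G (phi m))); last first.
  move=> m; rewrite mem_filter mem_iota => /andP[_ /andP[m0 _]].
  rewrite /G /phi /= {1}(mE m) a_mul ?expn_gt0 ?n0 ?quot_gt0 //.
  by apply: coprimeXl; rewrite prime_coprime // quot_ndvd.
apply: le_trans (_ : \sum_(y <- [seq (j, m') | j <- iota 0 M.+1, m' <- smooth_seq n M])
    G y <= _); last first.
  rewrite big_allpairs mulr_suml; apply: ler_sum => j _; rewrite mulr_sumr.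
  by apply: ler_sum => m _; exact: lexx.
apply: ler_sum_inj.
- by rewrite filter_uniq ?iota_uniq.
- by apply: allpairs_uniq; rewrite ?filter_uniq ?iota_uniq // => -[? ?] [? ?].
- move=> x y; rewrite !mem_filter !mem_iota => /andP[_ /andP[x0 _]] /andP[_ /andP[y0 _]].
  by move=> [e1 e2]; rewrite (mE x) (mE y) e2 e1.
- move=> m; rewrite mem_filter mem_iota => /andP[m_smooth /andP[m0 mM]].
  apply: allpairs_f.
    rewrite mem_iota /= add0n ltnS; apply: leq_trans (ltnW (ltn_expl _ n1)) _.
    by apply: leq_trans (dvdn_leq m0 (pfactor_dvdnn _ _)) _; lia.
  rewrite mem_filter mem_iota quot_gt0 //=; apply/andP; split; last first.
    by apply: leq_ltn_trans (leq_div _ _) _.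
  apply/allP => q qp.
  have : q \in primes m.
    move: qp; rewrite !mem_primes => /and3P[-> _ qd]; rewrite m0 /=.
    by apply: dvdn_trans qd _; apply: dvdn_div; apply: pfactor_dvdnn.
  move/(allP m_smooth); rewrite ltnS leq_eqVlt => /orP[/eqP qn|//].
  by move: qp (quot_ndvd m m0); rewrite mem_primes qn => /and3P[_ _ ->].
- by move=> y _; rewrite /G mulr_ge0.
Qed.

Lemma sum_smooth_le_prod M n :
  \sum_(m <- smooth_seq n M) a m <=
  \prod_(p < n | prime p) \sum_(j <- iota 0 M.+1) a (p ^ j)%N.
Proof.
elim: n => [|n IH].
  rewrite big_ord0; apply: le_trans (_ : \sum_(m <- [:: 1%N]) a m <= 1);
    last by rewrite big_seq1 a1.
  apply: ler_sum_subset_uniq => //; first by rewrite filter_uniq ?iota_uniq.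
  move=> x; rewrite mem_filter mem_iota => /andP[no_primes /andP[x1 _]].
  have /eqP : primes x = [::] by case: (primes x) no_primes.
  by rewrite primes_eq0 inE => x2; apply/eqP; lia.
rewrite [X in _ <= X]big_mkcond big_ord_recr /= -big_mkcond /=.
have [pn|npn] := boolP (prime n); last by rewrite mulr1 smooth_seq_nonprime.
apply: le_trans (sum_smooth_seq_prime M pn) _; rewrite mulrC.
by apply: ler_wpM2r IH; apply: sumr_ge0 => j _.
Qed.

Lemma sum_le_expR_prime_sums M :
  \sum_(1 <= m < M.+1) a m <=
  expR (\sum_(p < M.+1 | prime p) \sum_(1 <= j < M.+1) a (p ^ j)%N).
Proof.
have -> : \sum_(1 <= m < M.+1) a m = \sum_(m <- iota 1 M) a m.
  by rewrite /index_iota subn1.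
have := sum_smooth_le_prod M M.+1; rewrite smooth_seq_all => /le_trans; apply.
rewrite (eq_bigr (fun p : 'I_M.+1 => 1 + \sum_(1 <= j < M.+1) a (p ^ j)%N)).
  by apply: prod1D_le_expR_sum => p; apply: sumr_ge0.
move=> p _; have -> : iota 0 M.+1 = index_iota 0 M.+1 by rewrite /index_iota subn0.
by rewrite big_ltn // expn0 a1.
Qed.

End EulerProduct.

Section Renewal.
Variable R : realFieldType.

Lemma ler_geometric_sum (x : R) n : 0 <= x < 1 -> \sum_(i < n) x ^+ i <= (1 - x)^-1.
Proof.
move=> /andP[x0 x1]; have hx : 0 < 1 - x by rewrite subr_gt0.
elim: n => [|n IH]; first by rewrite big_ord0 invr_ge0 ltW.
rewrite big_ord_recl expr0.
rewrite (eq_bigr (fun i : 'I_n => x * x ^+ i)); last by move=> i _; rewrite exprS.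
rewrite -mulr_sumr; apply: le_trans (_ : 1 + x * (1 - x)^-1 <= _).
  by rewrite lerD2l ler_wpM2l.
by rewrite -[X in X + _](divff (lt0r_neq0 hx)) -mulrDl subrK mul1r.
Qed.

Lemma sum_conv_le_mul (a u : nat -> R) K :
  (forall j, 0 <= u j) -> (forall j, 0 <= a j) ->
  \sum_(1 <= j < K) \sum_(1 <= i < j) a i * u (j - i)%N <=
  (\sum_(1 <= i < K) a i) * (\sum_(1 <= l < K) u l).
Proof.
move=> u0 a0.
rewrite (eq_big_nat _ _ (F2 := fun j => \sum_(1 <= i < K)
    (if (i < j)%N then a i * u (j - i)%N else 0))); last first.
  move=> j /andP[_ jK]; rewrite (big_nat_widen _ _ _ _ _ (ltnW jK)) big_mkcond /=.
  by apply: eq_bigr.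
rewrite exchange_big_nat /= mulr_suml; apply: ler_sum_nat => i /andP[i1 iK].
rewrite -big_mkcond /= -mulr_sumr; apply: ler_wpM2l => //.
rewrite -[X in X <= _]big_filter.
apply: (@ler_sum_inj R _ _ _ _ (fun j => (j - i)%N) u).
- by rewrite filter_uniq // iota_uniq.
- exact: iota_uniq.
- by move=> x y; rewrite !mem_filter => /andP[xi _] /andP[yi _]; lia.
- by move=> x; rewrite mem_filter !mem_iota => /andP[xi /andP[x1 xK]]; apply/andP; split; lia.
- by move=> y _.
Qed.

Lemma sum_expr_le2 (r : R) n : 0 <= r <= 1/2 -> \sum_(0 <= i < n) r ^+ i <= 2.
Proof.
move=> /andP[r0 r1]; have r_lt1 : 0 <= r < 1 by apply/andP; split; lra.
rewrite big_mkord; apply: le_trans (ler_geometric_sum n r_lt1) _.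
by rewrite -[2]invrK lef_pV2 ?posrE; lra.
Qed.

Lemma sum_geometric_tail_le (d : nat -> R) (c r : R) (k K : nat) :
  0 <= c -> 0 <= r <= 1/2 -> (forall j, 0 <= d j) ->
  (forall j, (k < j)%N -> d j <= c * r ^+ j) ->
  \sum_(1 <= j < K) d j <= \sum_(1 <= j < k.+1) d j + 2 * c * r ^+ k.+1.
Proof.
move=> c0 r_bounds d0 d_le; have /andP[r0 _] := r_bounds.
set L := maxn K k.+1.
apply: le_trans (_ : \sum_(1 <= j < L) d j <= _).
  by apply: ler_sum_nat_widen => //; rewrite leq_maxl.
rewrite (big_cat_nat (isT : (1 <= k.+1)%N) (leq_maxr K k.+1)) /= lerD2l.
apply: le_trans (_ : \sum_(k.+1 <= j < L) c * r ^+ j <= _).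
  rewrite big_nat_cond [X in _ <= X]big_nat_cond.
  by apply: ler_sum => j /andP[/andP[j1 _] _]; apply: d_le.
rewrite -mulr_sumr -{1}(add0n k.+1) big_addn.
rewrite (eq_bigr (fun i => r ^+ i * r ^+ k.+1)); last by move=> i _; rewrite exprD.
have rk0 : 0 <= r ^+ k.+1 by apply: exprn_ge0.
have := ler_wpM2r rk0 (sum_expr_le2 (L - k.+1) r_bounds).
by rewrite -mulr_suml; nra.
Qed.

(* Since [\sum a <= 1/2], the convolution term absorbs at most half of
   [\sum u]. *)
Lemma renewal_sum_le (u a d : nat -> R) (eps r : R) (k K : nat) :
  0 <= eps <= 1/4 -> 0 <= r <= 1/2 ->
  (forall j, 0 <= u j) -> (forall j, 0 <= a j) -> (forall j, 0 <= d j) ->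
  (forall i, (1 <= i)%N -> a i <= eps * r ^+ i) ->
  (forall j, (k < j)%N -> d j <= 2 * eps * r ^+ j) ->
  (forall j, (1 <= j)%N -> u j <= d j + \sum_(1 <= i < j) a i * u (j - i)%N) ->
  \sum_(1 <= j < K) u j <= 2 * \sum_(1 <= j < k.+1) d j + 2 * r ^+ k.+1.
Proof.
move=> /andP[e0 e1] r_bounds u0 a0 d0 a_le d_le u_le.
have /andP[r0 r1] := r_bounds.
set U := \sum_(1 <= j < K) u j; set A := \sum_(1 <= i < K) a i.
have U_le : U <= \sum_(1 <= j < K) d j +
    \sum_(1 <= j < K) \sum_(1 <= i < j) a i * u (j - i)%N.
  rewrite /U -big_split /= big_nat_cond [X in _ <= X]big_nat_cond.
  by apply: ler_sum => j /andP[/andP[j1 _] _]; apply: u_le.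
have conv_le := sum_conv_le_mul K u0 a0; rewrite -/A -/U in conv_le.
have A_le : A <= 1/2.
  apply: le_trans (_ : \sum_(1 <= i < K) eps * r ^+ i <= _).
    rewrite /A big_nat_cond [X in _ <= X]big_nat_cond.
    by apply: ler_sum => i /andP[/andP[i1 _] _]; apply: a_le.
  rewrite -mulr_sumr; apply: le_trans (_ : eps * 2 <= _); last lra.
  apply: ler_wpM2l => //; apply: le_trans (sum_expr_le2 K r_bounds).
  by apply: ler_sum_nat_widen => // i; exact: exprn_ge0.
have U0 : 0 <= U by apply: sumr_ge0.
have A0 : 0 <= A by apply: sumr_ge0.
have : A * U <= 1/2 * U by apply: ler_wpM2r.
have rk0 : 0 <= r ^+ k.+1 by apply: exprn_ge0.
have := sum_geometric_tail_le K (mulr_ge0 (ler0n _ 2) e0) r_bounds d0 d_le.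
nra.
Qed.

End Renewal.

Section Powers.
Variable R : realType.

Lemma powR_exprn (x r : R) m : 0 <= x -> (x ^+ m) `^ r = (x `^ r) ^+ m.
Proof. by move=> x0; rewrite -powR_mulrn // powRAC powR_mulrn // powR_ge0. Qed.

Lemma powR_natrX (p j : nat) (r : R) : ((p ^ j)%N%:R) `^ r = (p%:R `^ r) ^+ j.
Proof. by rewrite natrX powR_exprn. Qed.

Lemma powR_natrM (p j : nat) (r : R) : (p%:R) `^ (j%:R * r) = (p%:R `^ r) ^+ j.
Proof. by rewrite powRrM powR_mulrn // -powR_exprn. Qed.

(* Cauchy condensation: the block [2^m <= n < 2^(m+1)] contributes at most
   [(2^(1-s))^m]. *)
Lemma zeta_partial_sums_bounded (s : R) : 1 < s ->
  exists B : R, forall N : nat, \sum_(1 <= n < N) (n%:R `^ s)^-1 <= B.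
Proof.
move=> s1; set t : R := 2 `^ (1 - s).
have t0 : 0 <= t by apply: powR_ge0.
have t1 : t < 1.
  rewrite /t /powR (negbTE (lt0r_neq0 _)) ?ltr0n // expR_lt1.
  by rewrite pmulr_llt0 ?ln_gt0 ?ltr1n // subr_lt0.
exists (1 - t)^-1 => N.
have F0 (n : nat) : 0 <= (n%:R `^ s : R)^-1 by rewrite invr_ge0 powR_ge0.
have dyadic m : \sum_(1 <= n < 2 ^ m) (n%:R `^ s : R)^-1 <= \sum_(i < m) t ^+ i.
  elim: m => [|m IH]; first by rewrite expn0 big_geq // big_ord0.
  have h1 : (1 <= 2 ^ m)%N by rewrite expn_gt0.
  have h2 : (2 ^ m <= 2 ^ m.+1)%N by rewrite leq_exp2l.
  rewrite (big_cat_nat h1 h2) big_ord_recr /=; apply: lerD => //.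
  apply: le_trans (_ : \sum_(2 ^ m <= n < 2 ^ m.+1)
      (((2 ^ m)%N%:R `^ s : R)^-1) <= _).
    rewrite big_nat_cond [X in _ <= X]big_nat_cond.
    apply: ler_sum => n /andP[/andP[hn _] _].
    have p0 : (0 < (2 ^ m)%N%:R :> R) by rewrite ltr0n expn_gt0.
    rewrite lef_pV2 ?posrE ?powR_gt0 //; last by apply: lt_le_trans p0 _; rewrite ler_nat.
    by apply: ge0_ler_powR; rewrite ?nnegrE ?ler_nat //; lra.
  rewrite sumr_const_nat.
  have -> : (2 ^ m.+1 - 2 ^ m = 2 ^ m)%N by rewrite expnS mul2n -addnn addnK.
  rewrite -[t ^+ m]powR_natrX powRB; last by rewrite pnatr_eq0 expn_eq0 implybT.
  by rewrite powRr1 ?ler0n // [X in _ <= X]mulrC mulr_natr.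
apply: le_trans (ler_sum_nat_widen (leqnn 1) (ltnW (ltn_expl N (isT : 1 < 2)%N)) F0) _.
by apply: le_trans (dyadic N) _; apply: ler_geometric_sum; rewrite t0.
Qed.

Lemma powR_ge2_eventually (e : R) : 0 < e ->
  exists N : nat, forall p : nat, (N < p)%N -> 2 <= p%:R `^ e.
Proof.
move=> e_gt0; set c : R := 2 `^ e^-1.
exists (Num.truncn c) => p Np.
have c_le : c <= p%:R.
  have /andP[_ c_lt] := truncn_itv (powR_ge0 2 e^-1).
  by apply: ltW (lt_le_trans c_lt _); rewrite ler_nat.
have -> : (2 : R) = c `^ e by rewrite /c -powRrM mulVf ?gt_eqF // powRr1.
apply: ge0_ler_powR => //; first exact: ltW.
  by rewrite nnegrE powR_ge0.
by rewrite nnegrE.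
Qed.

End Powers.

Section PrimePowerSums.
Variable R : realType.
Variables f g h : nat -> R[i].
Hypothesis f_mult : mult_fun f.
Hypothesis g_mult : mult_fun g.
Hypothesis gE : forall n : nat, (0 < n)%N -> g n = dconv f h n.

Lemma prime_power_renewal (p k K : nat) (P Q : R) :
  prime p -> 0 < P -> 0 < Q -> Q / P <= 1/2 ->
  (forall i, (0 < i)%N -> Normc.normc (f (p ^ i)%N) <= 1/4 * Q ^+ i) ->
  (forall i, (0 < i)%N -> Normc.normc (g (p ^ i)%N) <= 1/4 * Q ^+ i) ->
  \sum_(1 <= j < K) Normc.normc (h (p ^ j)%N) / P ^+ j <=
  2 * \sum_(1 <= j < k.+1) Normc.normc (g (p ^ j)%N - f (p ^ j)%N) / P ^+ j
  + 2 * (Q / P) ^+ k.+1.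
Proof.
move=> pp P0 Q0 r_le f_le g_le.
have r_bounds : 0 <= Q / P <= 1/2 by rewrite r_le divr_ge0 ?ltW.
have eps_bounds : 0 <= (1/4 : R) <= 1/4 by apply/andP; split; lra.
have rX j : (Q / P) ^+ j = Q ^+ j / P ^+ j by rewrite exprMn exprVn.
have PX_gt0 j : 0 < P ^+ j by apply: exprn_gt0.
pose u j := Normc.normc (h (p ^ j)%N) / P ^+ j.
pose a i := Normc.normc (f (p ^ i)%N) / P ^+ i.
pose d j := Normc.normc (g (p ^ j)%N - f (p ^ j)%N) / P ^+ j.
have u0 j : 0 <= u j by rewrite divr_ge0 ?normc_ge0 ?ltW.
have a0 j : 0 <= a j by rewrite divr_ge0 ?normc_ge0 ?ltW.
have d0 j : 0 <= d j by rewrite divr_ge0 ?normc_ge0 ?ltW.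
have a_le i : (0 < i)%N -> a i <= 1/4 * (Q / P) ^+ i.
  by move=> i0; rewrite /a rX [X in _ <= X]mulrA ler_pM2r ?invr_gt0 //; apply: f_le.
have d_le j : (k < j)%N -> d j <= 2 * (1/4) * (Q / P) ^+ j.
  move=> kj; have j0 : (0 < j)%N by apply: leq_ltn_trans kj.
  rewrite /d rX [X in _ <= X]mulrA ler_pM2r ?invr_gt0 //.
  apply: le_trans (le_normcD _ _) _; rewrite normcN.
  by have := f_le j j0; have := g_le j j0; lra.
have u_le j : (0 < j)%N -> u j <= d j + \sum_(1 <= i < j) a i * u (j - i)%N.
  move=> j0; have := conv_quot_pfactor_le f_mult g_mult gE pp j0 P0.
  by rewrite /u /d /a.
exact: renewal_sum_le K eps_bounds r_bounds u0 a0 d0 a_le d_le u_le.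
Qed.

Lemma prime_power_sum_le (p k K : nat) (sigma delta beta : R) :
  prime p -> beta <= sigma -> 2 <= p%:R `^ (sigma - delta) ->
  (forall i, (0 < i)%N -> Normc.normc (f (p ^ i)%N) <= 1/4 * (p ^ i)%N%:R `^ delta) ->
  (forall i, (0 < i)%N -> Normc.normc (g (p ^ i)%N) <= 1/4 * (p ^ i)%N%:R `^ delta) ->
  \sum_(1 <= j < K) Normc.normc (h (p ^ j)%N) / (p ^ j)%N%:R `^ sigma <=
   2 * \sum_(1 <= j < k.+1)
         Normc.normc (f (p ^ j)%N - g (p ^ j)%N) / p%:R `^ (j%:R * beta)
   + 2 * (p%:R `^ ((sigma - delta) * k.+1%:R))^-1.
Proof.
move=> pp beta_le p_large f_le g_le.
have p1 : (1 <= p%:R :> R) by rewrite ler1n prime_gt0.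
have pn0 : (p%:R != 0 :> R) by rewrite pnatr_eq0 -lt0n prime_gt0.
set P := p%:R `^ sigma; set Q := p%:R `^ delta.
have P0 : 0 < P by apply: powR_gt0; lra.
have Q0 : 0 < Q by apply: powR_gt0; lra.
have PQ : P = p%:R `^ (sigma - delta) * Q by rewrite /P /Q -powRD ?subrK // pn0 implybT.
have r_le : Q / P <= 1/2 by rewrite ler_pdivrMr // PQ; nra.
under eq_bigr do rewrite powR_natrX -/P.
apply: le_trans (prime_power_renewal k K pp P0 Q0 r_le _ _) _.
- by move=> i i0; rewrite /Q -powR_natrX; apply: f_le.
- by move=> i i0; rewrite /Q -powR_natrX; apply: g_le.
apply: lerD; rewrite ler_pM2l ?ltr0n //.
  apply: ler_sum_nat => j /andP[j1 _].
  rewrite -opprB normcN; apply: ler_wpM2l; first exact: normc_ge0.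
  rewrite lef_pV2 ?posrE ?powR_gt0 ?exprn_gt0 ?(lt_le_trans ltr01 p1) //.
  rewrite powR_natrM -/P; apply: lerXn2r; rewrite ?nnegrE ?powR_ge0 //.
  exact: ler_powR.
have -> : Q / P = (p%:R `^ (sigma - delta))^-1.
  by rewrite PQ invfM mulrCA divff ?mulr1 // lt0r_neq0.
by rewrite exprVn powRrM powR_mulrn ?powR_ge0.
Qed.

End PrimePowerSums.

Section QuotientWeights.
Variable R : realType.
Variables f g h : nat -> R[i].
Hypothesis f_mult : mult_fun f.
Hypothesis g_mult : mult_fun g.
Hypothesis gE : forall n : nat, (0 < n)%N -> g n = dconv f h n.
Variables (beta delta sigma : R) (k N : nat).
Hypothesis beta_le : beta <= sigma.
Hypothesis zeta_exp : 1 < (sigma - delta) * k.+1%:R.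
Hypothesis p_large : forall p : nat, (N < p)%N -> 2 <= p%:R `^ (sigma - delta).
Hypothesis f_small : forall n : nat, (N < n)%N ->
  Normc.normc (f n) <= 1/4 * n%:R `^ delta.
Hypothesis g_small : forall n : nat, (N < n)%N ->
  Normc.normc (g n) <= 1/4 * n%:R `^ delta.

Lemma large_prime_weight_le p K : prime p -> (N < p)%N ->
  \sum_(1 <= j < K) Normc.normc (h (p ^ j)%N) / (p ^ j)%N%:R `^ sigma <=
   2 * \sum_(1 <= j < k.+1)
         Normc.normc (f (p ^ j)%N - g (p ^ j)%N) / p%:R `^ (j%:R * beta)
   + 2 * (p%:R `^ ((sigma - delta) * k.+1%:R))^-1.
Proof.
move=> pp Np; have pX_large i : (0 < i)%N -> (N < p ^ i)%N.
  by move=> i0; apply: leq_trans Np (leq_pexp2l (prime_gt0 pp) i0).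
apply: (prime_power_sum_le f_mult g_mult gE k K pp beta_le (p_large Np)).
  by move=> i i0; apply/f_small/pX_large.
by move=> i i0; apply/g_small/pX_large.
Qed.

Lemma prime_weight_sums_le (BH BP BZ : R) M :
  (forall K, \sum_(p < N.+1 | prime p) \sum_(1 <= j < K)
      Normc.normc (h (p ^ j)%N) / p%:R `^ (j%:R * sigma) <= BH) ->
  (forall L, \sum_(p < L | prime p) \sum_(1 <= j < k.+1)
      Normc.normc (f (p ^ j)%N - g (p ^ j)%N) / p%:R `^ (j%:R * beta) <= BP) ->
  (forall L, \sum_(1 <= n < L) (n%:R `^ ((sigma - delta) * k.+1%:R))^-1 <= BZ) ->
  \sum_(p < M.+1 | prime p) \sum_(1 <= j < M.+1)
      Normc.normc (h (p ^ j)%N) / (p ^ j)%N%:R `^ sigma <= BH + 2 * BP + 2 * BZ.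
Proof.
move=> BH_ge BP_ge BZ_ge.
pose X p := \sum_(1 <= j < M.+1) Normc.normc (h (p ^ j)%N) / (p ^ j)%N%:R `^ sigma.
pose F p := if prime p then X p else 0.
have F_ge0 p : 0 <= F p.
  by rewrite /F; case: ifP => // _; apply: sumr_ge0 => j _;
    rewrite divr_ge0 ?normc_ge0 ?powR_ge0.
have -> : \sum_(p < M.+1 | prime p) X p = \sum_(0 <= p < M.+1) F p.
  by rewrite big_mkcond /= -(big_mkord xpredT F).
set L := (M.+1 + N.+1)%N.
apply: le_trans (ler_sum_nat_widen (leqnn 0) (leq_addr N.+1 M.+1) F_ge0) _.
rewrite (big_cat_nat (leq0n N.+1) (leq_addl M.+1 N.+1)) /= -addrA; apply: lerD.
  apply: le_trans (BH_ge M.+1).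
  rewrite -(big_mkord prime (fun p => \sum_(1 <= j < M.+1)
     Normc.normc (h (p ^ j)%N) / p%:R `^ (j%:R * sigma))).
  rewrite [X in _ <= X]big_mkcond /=; apply: ler_sum_nat => p _.
  rewrite /F; case: ifP => // _; rewrite le_eqVlt; apply/orP; left; apply/eqP.
  by apply: eq_bigr => j _; rewrite powR_natrX powR_natrM.
pose Pt p := if prime p then \sum_(1 <= j < k.+1)
    Normc.normc (f (p ^ j)%N - g (p ^ j)%N) / p%:R `^ (j%:R * beta) else 0.
pose Z (n : nat) := (n%:R `^ ((sigma - delta) * k.+1%:R) : R)^-1.
have Pt_ge0 p : 0 <= Pt p.
  by rewrite /Pt; case: ifP => // _; apply: sumr_ge0 => j _;
    rewrite divr_ge0 ?normc_ge0 ?powR_ge0.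
have Z_ge0 n : 0 <= Z n by rewrite invr_ge0 powR_ge0.
apply: le_trans (_ : \sum_(N.+1 <= p < L) (2 * Pt p + 2 * Z p) <= _).
  apply: ler_sum_nat => p /andP[Np _]; rewrite /F /Pt.
  case: ifP => pp; last by rewrite mulr0 add0r mulr_ge0.
  exact: large_prime_weight_le.
rewrite big_split /= -!mulr_sumr; apply: lerD; apply: ler_wpM2l => //.
  apply: le_trans (ler_sum_nat_widen (leq0n N.+1) (leqnn L) Pt_ge0) _.
  apply: le_trans (BP_ge L).
  by rewrite [X in _ <= X]big_mkcond /= big_mkord; apply: ler_sum => p _.
by apply: le_trans (BZ_ge L); apply: ler_sum_nat_widen.
Qed.

Lemma conv_quot_weights_bounded :
  Hhat_convergent h N%:R sigma -> strongly_pretentious beta k f g ->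
  exists K : R, forall M : nat,
    \sum_(1 <= m < M.+1) Normc.normc (h m) / m%:R `^ sigma <= K.
Proof.
move=> [BH BH_ge] [BP BP_ge]; rewrite natrK in BH_ge.
have [BZ BZ_ge] := zeta_partial_sums_bounded zeta_exp.
exists (expR (BH + 2 * BP + 2 * BZ)) => M.
pose w m := Normc.normc (h m) / m%:R `^ sigma.
have w1 : w 1%N = 1 by rewrite /w (conv_quot1 f_mult g_mult gE) Normc.normc1 powR1 divr1.
have w_ge0 m : 0 <= w m by rewrite divr_ge0 ?normc_ge0 ?powR_ge0.
have w_mul m n : (0 < m)%N -> (0 < n)%N -> coprime m n -> w (m * n)%N = w m * w n.
  move=> m0 n0 cmn; rewrite /w (conv_quot_mul f_mult g_mult gE m0 n0 cmn).
  by rewrite Normc.normcM natrM powRM ?ler0n // invfM mulrACA.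
apply: le_trans (sum_le_expR_prime_sums w1 w_ge0 w_mul M) _.
by rewrite ler_expR; exact: prime_weight_sums_le M BH_ge BP_ge BZ_ge.
Qed.

End QuotientWeights.

Theorem theorem3 (R : realType) (f g h : nat -> R[i])
    (alpha beta delta sigma : R) (k : nat) :
  mult_fun f -> mult_fun g ->
  Sbound f alpha ->
  (0 < k)%N -> strongly_pretentious beta k f g ->
  0 < delta -> little_o_pow f delta -> little_o_pow g delta ->
  (forall n : nat, (0 < n)%N -> g n = dconv f h n) ->
  1 / (k.+1)%:R + delta < sigma -> Num.max alpha beta <= sigma ->
  exists Y : R, 0 < Y /\ (Hhat_convergent h Y sigma -> Sbound g sigma).
Proof.
move=> f_mult g_mult Sf _ fg_pret _ f_small g_small gE sigma_gt sigma_ge.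
have [alpha_le beta_le] : alpha <= sigma /\ beta <= sigma.
  by move: sigma_ge; rewrite ge_max => /andP.
have zeta_exp : 1 < (sigma - delta) * k.+1%:R.
  by rewrite -ltr_pdivrMr ?ltr0n // ltrBrDr.
have sd_gt0 : 0 < sigma - delta.
  by have := lt_trans ltr01 zeta_exp; rewrite pmulr_lgt0 ?ltr0n.
have quarter_gt0 : (0 : R) < 1/4 by lra.
have [Nf Nf_small] := f_small _ quarter_gt0.
have [Ng Ng_small] := g_small _ quarter_gt0.
have [Np Np_large] := powR_ge2_eventually sd_gt0.
pose N := (maxn (maxn Nf Ng) Np).+1.
have N_large p : (N < p)%N -> 2 <= p%:R `^ (sigma - delta).
  by rewrite /N => ?; apply: Np_large; lia.
have N_f_small n : (N < n)%N -> Normc.normc (f n) <= 1/4 * n%:R `^ delta.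
  by rewrite /N => ?; apply: Nf_small; lia.
have N_g_small n : (N < n)%N -> Normc.normc (g n) <= 1/4 * n%:R `^ delta.
  by rewrite /N => ?; apply: Ng_small; lia.
exists N%:R; split; first by rewrite ltr0n.
move=> hH; have [K HK] := conv_quot_weights_bounded f_mult g_mult gE beta_le
  zeta_exp N_large N_f_small N_g_small hH fg_pret.
have [C SC] := Sbound_dconv Sf alpha_le HK.
by exists C => x x1; rewrite (eq_Ssum x gE); apply: SC.
Qed.
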